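(* Let $U$ be a single-qubit unitary and let $U'$ be a qutrit unitary emulating $U$. Suppose we are given the two-qutrit $\ket{2}$-controlled $U'$ gate. Then there is a three-qutrit circuit consisting of this given gate together with qutrit Clifford gates that emulates the three-qubit doubly-controlled gate $\mathrm{CC}U$ (which applies $U$ to the third qubit iff the first two qubits are both $\ket{1}$); in particular its non-Clifford cost equals that of the given $\ket{2}$-controlled $U'$ gate.
   Context: A qutrit is $\mathbb{C}^3$ with basis $\ket{0},\ket{1},\ket{2}$; $\omega=e^{2\pi i/3}$. Qutrit Clifford gates are those generated (up to global phase) by $S=\mathrm{diag}(1,1,\omega)$, $H=\frac{1}{\sqrt3}\begin{pmatrix}1&1&1\\1&\omega&\bar\omega\\1&\bar\omega&\omega\end{pmatrix}$ and $\mathrm{CX}:\ket{i,j}\mapsto\ket{i,(i+j)\bmod3}$. A qutrit unitary emulates a qubit unitary $U$ if, identifying qubit basis states $\ket{x}$, $x\in\{0,1\}^n$, with the equally labelled qutrit basis states, it maps each $\ket{x}$ to $U\ket{x}$. For a qutrit unitary $V$, the $\ket{2}$-controlled $V$ is the unitary acting as $\ket{0}\otimes\ket{\psi}\mapsto\ket{0}\otimes\ket{\psi}$, $\ket{1}\otimes\ket{\psi}\mapsto\ket{1}\otimes\ket{\psi}$, $\ket{2}\otimes\ket{\psi}\mapsto\ket{2}\otimes V\ket{\psi}$. The non-Clifford cost of a circuit is its number of non-Clifford gates. *)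

From HB Require Import structures.
From mathcomp Require Import all_boot all_order all_algebra.
Set Implicit Arguments. Unset Strict Implicit. Unset Printing Implicit Defensive.
Import Order.TTheory GRing.Theory Num.Theory.
Local Open Scope ring_scope.

Section Qutrit.
Variable C : numClosedFieldType.

Definition adjmx n (M : 'M[C]_n) : 'M[C]_n := (map_mx (fun z => Num.conj z) M)^T.
Definition unitary n (M : 'M[C]_n) : Prop := M *m adjmx M = 1%:M.

(* omega = e^{2 pi i/3} = (-1 + i sqrt 3)/2 *)
Definition omega : C := (-1 + Num.imaginary * sqrtC 3) / 2.

Definition S_gate : 'M[C]_3 :=
  \matrix_(i, j) if i == j then (if (i : nat) == 2%N then omega else 1) else 0.
Definition H_gate : 'M[C]_3 :=
  \matrix_(i, j) (omega ^+ ((i : nat) * (j : nat))%N / sqrtC 3).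

(* two-qutrit gates on C^3 (x) C^3, basis index 3*a + b for |a,b> *)
Definition CX_gate : 'M[C]_9 :=
  \matrix_(i, j)
    if (((i : nat) %/ 3 == (j : nat) %/ 3)
       && ((i : nat) %% 3 == ((j : nat) %/ 3 + (j : nat) %% 3) %% 3))%N
    then 1 else 0.
(* |2>-controlled V: control first qutrit, target second *)
Definition ctrl2 (V : 'M[C]_3) : 'M[C]_9 :=
  \matrix_(i, j)
    if ((i : nat) %/ 3 == (j : nat) %/ 3)%N then
      (if ((i : nat) %/ 3 == 2)%N then V (inord ((i : nat) %% 3)%N) (inord ((j : nat) %% 3)%N)
       else if ((i : nat) %% 3 == (j : nat) %% 3)%N then 1 else 0)
    else 0.

(* three-qutrit register: basis index 9*a0 + 3*a1 + a2 for |a0,a1,a2>;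
   wire k : 'I_3 has digit weight 3^(2-k) *)
Definition qdigit (k : 'I_3) (i : 'I_27) : nat := (((i : nat) %/ 3 ^ (2 - k)) %% 3)%N.

Definition embed1 (k : 'I_3) (G : 'M[C]_3) : 'M[C]_27 :=
  \matrix_(i, j)
    if [forall m : 'I_3, (m != k) ==> (qdigit m i == qdigit m j)]
    then G (inord (qdigit k i)) (inord (qdigit k j)) else 0.

Definition embed2 (k l : 'I_3) (G : 'M[C]_9) : 'M[C]_27 :=
  \matrix_(i, j)
    if [forall m : 'I_3, ((m != k) && (m != l)) ==> (qdigit m i == qdigit m j)]
    then G (inord (3 * qdigit k i + qdigit l i)%N) (inord (3 * qdigit k j + qdigit l j)%N)
    else 0.

Inductive gate :=
  | GS of 'I_3
  | GH of 'I_3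
  | GCX of 'I_3 & 'I_3    (* CX, control wire, target wire *)
  | GPhase of C           (* global phase (Cliffords are taken up to phase) *)
  | GCV of 'I_3 & 'I_3.   (* the given |2>-controlled U' gate: control, target *)

Definition gate_wf (g : gate) : bool :=
  match g with
  | GCX k l | GCV k l => k != l
  | GPhase c => `|c| == 1
  | _ => true
  end.

Definition is_given (g : gate) : bool := if g is GCV _ _ then true else false.

Definition gate_mx (U' : 'M[C]_3) (g : gate) : 'M[C]_27 :=
  match g with
  | GS k => embed1 k S_gate
  | GH k => embed1 k H_gate
  | GCX k l => embed2 k l CX_gate
  | GPhase c => c%:M
  | GCV k l => embed2 k l (ctrl2 U')
  end.

(* gates applied in list order: the first gate acts first *)
Definition circuit_mx (U' : 'M[C]_3) (c : seq gate) : 'M[C]_27 :=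
  foldl (fun M g => gate_mx U' g *m M) 1%:M c.

(* qubit basis index x < 2^n (bit k has weight 2^k) is identified with the
   qutrit basis index having the same digits in base 3 *)
Definition b2t (n x : nat) : nat := (\sum_(k < n) ((x %/ 2 ^ k) %% 2) * 3 ^ k)%N.
Definition qembed n : 'M[C]_(3 ^ n, 2 ^ n)%N :=
  \matrix_(i, j) if ((i : nat) == b2t n j)%N then 1 else 0.
Definition emulates n (V : 'M[C]_(3 ^ n)%N) (W : 'M[C]_(2 ^ n)%N) : Prop :=
  V *m qembed n = qembed n *m W.

(* doubly-controlled U on three qubits; basis index 4*x0 + 2*x1 + x2;
   indices 6,7 are |1,1,0>, |1,1,1> *)
Definition CCU (U : 'M[C]_2) : 'M[C]_(2 ^ 3)%N :=
  \matrix_(i, j)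
    if (6 <= (i : nat))%N && (6 <= (j : nat))%N
    then U (inord ((i : nat) - 6)%N) (inord ((j : nat) - 6)%N)
    else if i == j then 1 else 0.

End Qutrit.

From mathcomp Require Import all_boot all_order all_algebra zify.
Import GRing.Theory Num.Theory.
Local Open Scope ring_scope.

(* CX from wire 0 to wire 1 permutes the basis by |a, b, c> |-> |a, a + b mod 3, c>,
   and CX^2 is its inverse.  On qubit inputs a + b = 2 exactly when a = b = 1, so
   conjugating the |2>-controlled U' (control wire 1, target wire 2) by this CX applies
   U' to wire 2 precisely on |1, 1, c>.  As U' emulates U, it maps |0>, |1> into their
   span, and the circuit CX; CV; CX; CX emulates CCU. *)

Section Qutrit.
Variable C : numClosedFieldType.

Lemma mulmx_onehot_row {m n p} {A : 'M[C]_(m, n)} {N : 'M[C]_(n, p)} {i j} k0 :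
  (forall k, A i k = if k == k0 then 1 else 0) -> (A *m N) i j = N k0 j.
Proof.
move=> Ai; rewrite mxE (bigD1 k0) //= Ai eqxx mul1r big1 ?addr0 // => k /negbTE nk.
by rewrite Ai nk mul0r.
Qed.

Lemma mulmx_onehot_col {m n p} {M : 'M[C]_(m, n)} {B : 'M[C]_(n, p)} {i j} k0 :
  (forall k, B k j = if k == k0 then 1 else 0) -> (M *m B) i j = M i k0.
Proof.
move=> Bj; rewrite mxE (bigD1 k0) //= Bj eqxx mulr1 big1 ?addr0 // => k /negbTE nk.
by rewrite Bj nk mulr0.
Qed.

Definition wire0 : 'I_3 := @Ordinal 3 0 isT.
Definition wire1 : 'I_3 := @Ordinal 3 1 isT.
Definition wire2 : 'I_3 := @Ordinal 3 2 isT.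

Lemma qdigit_lt k i : (qdigit k i < 3)%N.
Proof. exact: ltn_pmod. Qed.

Lemma qdigitE (i : 'I_27) : [/\ qdigit wire0 i = (i %/ 9 %% 3)%N,
  qdigit wire1 i = (i %/ 3 %% 3)%N & qdigit wire2 i = (i %% 3)%N].
Proof. by rewrite /qdigit /= divn1. Qed.

Lemma ord27_digits (i : 'I_27) :
  i = (9 * qdigit wire0 i + 3 * qdigit wire1 i + qdigit wire2 i)%N :> nat.
Proof. case: (qdigitE i) => -> -> ->; have := ltn_ord i; lia. Qed.

Lemma eq_ord27 (i j : 'I_27) : (i == j) =
  [&& qdigit wire0 i == qdigit wire0 j, qdigit wire1 i == qdigit wire1 j
    & qdigit wire2 i == qdigit wire2 j].
Proof.
apply/eqP/and3P => [-> // | [/eqP d0 /eqP d1 /eqP d2]].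
by apply: val_inj; rewrite /= ord27_digits [val j]ord27_digits d0 d1 d2.
Qed.

Definition trit3 (a b c : nat) : 'I_27 := inord (9 * a + 3 * b + c).

Section Trit3.
Variables (a b c : nat).
Hypotheses (ha : (a < 3)%N) (hb : (b < 3)%N) (hc : (c < 3)%N).

Let trit3E : trit3 a b c = (9 * a + 3 * b + c)%N :> nat.
Proof. by rewrite inordK //; lia. Qed.

Lemma trit3_digit0 : qdigit wire0 (trit3 a b c) = a.
Proof. by case: (qdigitE (trit3 a b c)) => -> _ _; rewrite trit3E; lia. Qed.
Lemma trit3_digit1 : qdigit wire1 (trit3 a b c) = b.
Proof. by case: (qdigitE (trit3 a b c)) => _ -> _; rewrite trit3E; lia. Qed.
Lemma trit3_digit2 : qdigit wire2 (trit3 a b c) = c.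
Proof. by case: (qdigitE (trit3 a b c)) => _ _ ->; rewrite trit3E; lia. Qed.
End Trit3.

Definition third_wire (k l : 'I_3) : 'I_3 := inord (3 - k - l).

Lemma eq_third_wire (k l m : 'I_3) : k != l ->
  (m == third_wire k l) = (m != k) && (m != l).
Proof.
case: k l m => [[|[|[|//]]] ?] [[|[|[|//]]] ?] [[|[|[|//]]] ?];
  by rewrite /third_wire -!(inj_eq val_inj) //= inordK.
Qed.

Lemma embed2E k l (G : 'M[C]_9) i j : k != l ->
  embed2 k l G i j =
  if qdigit (third_wire k l) i == qdigit (third_wire k l) j
  then G (inord (3 * qdigit k i + qdigit l i)) (inord (3 * qdigit k j + qdigit l j))
  else 0.
Proof.
move=> kl; rewrite mxE; congr (if _ then _ else _).
apply/forallP/eqP => [/(_ (third_wire k l)) | dt m].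
  by rewrite -eq_third_wire // eqxx => /eqP.
by apply/implyP; rewrite -eq_third_wire // => /eqP ->; apply/eqP.
Qed.

Lemma third_wire01 : third_wire wire0 wire1 = wire2.
Proof. by apply: val_inj; rewrite /= inordK. Qed.
Lemma third_wire12 : third_wire wire1 wire2 = wire0.
Proof. by apply: val_inj; rewrite /= inordK. Qed.

Lemma trit_pairK a {b} : (b < 3)%N -> ((3 * a + b) %/ 3 = a)%N /\ ((3 * a + b) %% 3 = b)%N.
Proof. by move=> hb; split; lia. Qed.

Lemma CX_gate_pair a b a' b' : (a < 3)%N -> (b < 3)%N -> (a' < 3)%N -> (b' < 3)%N ->
  CX_gate C (inord (3 * a + b)) (inord (3 * a' + b')) =
  if (a == a') && (b == (a' + b') %% 3)%N then 1 else 0.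
Proof.
move=> ha hb ha' hb'; rewrite mxE !inordK; try lia.
by case: (trit_pairK a hb) (trit_pairK a' hb') => -> -> [-> ->].
Qed.

Lemma ctrl2_pair (V : 'M[C]_3) a b a' b' :
  (a < 3)%N -> (b < 3)%N -> (a' < 3)%N -> (b' < 3)%N ->
  ctrl2 V (inord (3 * a + b)) (inord (3 * a' + b')) =
  if a == a' then (if a == 2%N then V (inord b) (inord b') else if b == b' then 1 else 0)
  else 0.
Proof.
move=> ha hb ha' hb'; rewrite mxE !inordK; try lia.
by case: (trit_pairK a hb) (trit_pairK a' hb') => -> -> [-> ->].
Qed.

Definition cx01 (i : 'I_27) : 'I_27 :=
  trit3 (qdigit wire0 i) ((qdigit wire0 i + qdigit wire1 i) %% 3) (qdigit wire2 i).

Lemma cx01_digits i : [/\ qdigit wire0 (cx01 i) = qdigit wire0 i,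
  qdigit wire1 (cx01 i) = ((qdigit wire0 i + qdigit wire1 i) %% 3)%N
  & qdigit wire2 (cx01 i) = qdigit wire2 i].
Proof.
have lt3 := qdigit_lt; have ltm n : (n %% 3 < 3)%N by rewrite ltn_pmod.
by rewrite trit3_digit0 ?trit3_digit1 ?trit3_digit2.
Qed.

Lemma embed2_CX01 i k :
  embed2 wire0 wire1 (CX_gate C) i k = if i == cx01 k then 1 else 0.
Proof.
rewrite embed2E // third_wire01 CX_gate_pair ?qdigit_lt // eq_ord27.
case: (cx01_digits k) => -> -> ->.
by case: (qdigit wire2 i == _); rewrite ?andbT ?andbF.
Qed.

Lemma cx01_cube i : cx01 (cx01 (cx01 i)) = i.
Proof.
apply/eqP; rewrite eq_ord27.
case: (cx01_digits (cx01 (cx01 i))) (cx01_digits (cx01 i)) (cx01_digits i).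
move=> -> -> -> [-> -> ->] [-> -> ->]; rewrite !eqxx andbT.
by apply/eqP; have := qdigit_lt wire0 i; have := qdigit_lt wire1 i; lia.
Qed.

Lemma cx01_inj : injective cx01.
Proof. exact: (can_inj (g := cx01 \o cx01) cx01_cube). Qed.

Lemma cx01_invE i l : (cx01 (cx01 i) == l) = (i == cx01 l).
Proof. by rewrite -(inj_eq cx01_inj) cx01_cube. Qed.

Lemma mulmx_CX01 p (M : 'M[C]_(27, p)) i j :
  (embed2 wire0 wire1 (CX_gate C) *m M) i j = M (cx01 (cx01 i)) j.
Proof.
apply: mulmx_onehot_row => k.
by rewrite embed2_CX01 [k == _]eq_sym cx01_invE.
Qed.

Definition qubit3 (j : 'I_8) : 'I_27 := trit3 (j %/ 4) (j %/ 2 %% 2) (j %% 2).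

Lemma qubit3_digits j : [/\ qdigit wire0 (qubit3 j) = (j %/ 4)%N,
  qdigit wire1 (qubit3 j) = (j %/ 2 %% 2)%N & qdigit wire2 (qubit3 j) = (j %% 2)%N].
Proof.
by move: (ltn_ord j) => lt8; rewrite trit3_digit0 ?trit3_digit1 ?trit3_digit2 //; lia.
Qed.

Lemma b2t3 (j : 'I_8) : b2t 3 j = (9 * (j %/ 4) + 3 * (j %/ 2 %% 2) + j %% 2)%N.
Proof. by rewrite /b2t !big_ord_recr big_ord0 /=; have := ltn_ord j; lia. Qed.

Lemma qubit3E j : qubit3 j = b2t 3 j :> nat.
Proof. by rewrite /qubit3 /trit3 b2t3 inordK //; have := ltn_ord j; lia. Qed.

Lemma qembed3E i j : qembed C 3 i j = if i == qubit3 j then 1 else 0.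
Proof. by rewrite mxE -qubit3E. Qed.

Lemma mulmx_CX01_qembed3 m (M : 'M[C]_(m, 27)) r j :
  (M *m (embed2 wire0 wire1 (CX_gate C) *m qembed C 3)) r j = M r (cx01 (qubit3 j)).
Proof.
apply: mulmx_onehot_col => k.
by rewrite mulmx_CX01 qembed3E cx01_invE.
Qed.

(* Normal form of entry (i, j) of both sides of the emulation identity; W is the
   target block, U' on the circuit side and U padded by a zero row on the other. *)
Definition ccu_coef (W : nat -> nat -> C) (i : 'I_27) (j : 'I_8) : C :=
  if ((qdigit wire0 i == j %/ 4) && (qdigit wire1 i == j %/ 2 %% 2))%N then
    if (6 <= j)%N then W (qdigit wire2 i) (j %% 2)%N
    else if qdigit wire2 i == (j %% 2)%N then 1 else 0
  else 0.

Lemma eq_ccu_coef W1 W2 i j :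
  (forall r s, (r < 3)%N -> (s < 2)%N -> W1 r s = W2 r s) ->
  ccu_coef W1 i j = ccu_coef W2 i j.
Proof. by move=> W12; rewrite /ccu_coef W12 ?qdigit_lt ?ltn_pmod. Qed.

Lemma ctrl2_CX01_entry (V : 'M[C]_3) i j :
  embed2 wire1 wire2 (ctrl2 V) (cx01 i) (cx01 (qubit3 j)) =
  ccu_coef (fun r s => V (inord r) (inord s)) i j.
Proof.
have lt8 := ltn_ord j; have lt1 := qdigit_lt wire1 i.
rewrite embed2E // third_wire12.
case: (cx01_digits i) (cx01_digits (qubit3 j)) (qubit3_digits j).
move=> -> -> -> [-> -> ->] [-> -> ->].
rewrite ctrl2_pair ?qdigit_lt ?ltn_pmod //; last by lia.
rewrite /ccu_coef; case: (qdigit wire0 i =P j %/ 4)%N => [-> | //] /=.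
have -> : ((j %/ 4 + qdigit wire1 i) %% 3 == (j %/ 4 + j %/ 2 %% 2) %% 3)%N =
          (qdigit wire1 i == j %/ 2 %% 2)%N by apply/eqP/eqP; lia.
case: eqP => [-> | //].
by have -> : ((j %/ 4 + j %/ 2 %% 2) %% 3 == 2)%N = (6 <= j)%N by apply/eqP/idP; lia.
Qed.

Lemma CCU_bits (U : 'M[C]_2) (k j : 'I_8) : CCU U k j =
  if ((k %/ 4 == j %/ 4) && (k %/ 2 %% 2 == j %/ 2 %% 2))%N then
    if (6 <= j)%N then U (inord (k %% 2)) (inord (j %% 2))
    else if (k %% 2 == j %% 2)%N then 1 else 0
  else 0.
Proof.
rewrite mxE -(inj_eq val_inj).
by case: k j => [[|[|[|[|[|[|[|[|//]]]]]]]] ?] [[|[|[|[|[|[|[|[|//]]]]]]]] ?].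
Qed.

Lemma qembed3_CCU_entry (U : 'M[C]_2) (i : 'I_27) (j : 'I_8) :
  (qembed C 3 *m CCU U) i j =
  ccu_coef (fun r s => if (r < 2)%N then U (inord r) (inord s) else 0) i j.
Proof.
have lt2 := qdigit_lt wire2 i.
case: (boolP [&& qdigit wire0 i < 2, qdigit wire1 i < 2 & qdigit wire2 i < 2]%N).
  case/and3P=> b0 b1 b2.
  pose k : 'I_8 := inord (4 * qdigit wire0 i + 2 * qdigit wire1 i + qdigit wire2 i).
  have [k0 k1 k2] : [/\ k %/ 4 = qdigit wire0 i, k %/ 2 %% 2 = qdigit wire1 i
                     & k %% 2 = qdigit wire2 i]%N by rewrite /k inordK; [split | ]; lia.
  rewrite (mulmx_onehot_row k) => [|l]; last first.
    rewrite qembed3E eq_ord27; case: (qubit3_digits l) => -> -> ->.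
    rewrite -k0 -k1 -k2; congr (if _ then _ else _).
    apply/and3P/eqP => [[/eqP e0 /eqP e1 /eqP e2] | -> //].
    by apply: ord_inj; have := ltn_ord l; have := ltn_ord k; lia.
  by rewrite CCU_bits /ccu_coef -k0 -k1 -k2 ltn_pmod.
move=> not_qubit; rewrite mxE big1 => [|l _]; last first.
  rewrite qembed3E eq_ord27; case: (qubit3_digits l) => -> -> ->.
  case: and3P => [[/eqP e0 /eqP e1 /eqP e2] | _]; last by rewrite mul0r.
  (* the summation index has type 'I_(2 ^ 3) *)
  have lt8 := ltn_ord (l : 'I_8).
  by case/negP: not_qubit; rewrite e0 e1 e2; apply/and3P; split; lia.
rewrite /ccu_coef; case: andP => // -[/eqP e0 /eqP e1].
have lt8 := ltn_ord j; have hi0 : (j %/ 4 < 2)%N by lia.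
have -> : qdigit wire2 i = 2%N.
  by move: not_qubit; rewrite e0 e1 hi0 ltn_pmod //= -leqNgt; lia.
by case: ifP => //; case: eqP => //; lia.
Qed.

Lemma b2t1 x : (x < 2)%N -> b2t 1 x = x.
Proof. by move=> x2; rewrite /b2t big_ord1 expn0 muln1 divn1 modn_small. Qed.

Lemma qembed1E (r : 'I_3) (s : 'I_2) : qembed C 1 r s = if (r == s :> nat) then 1 else 0.
Proof. by rewrite mxE b2t1. Qed.

Lemma emulates1_entry (U : 'M[C]_2) (U' : 'M[C]_3) : emulates (n := 1) U' U ->
  forall r s, (r < 3)%N -> (s < 2)%N ->
  U' (inord r) (inord s) = if (r < 2)%N then U (inord r) (inord s) else 0.
Proof.
move=> /matrixP emU r s r3 s2; move/(_ (inord r) (inord s)): emU.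
rewrite (mulmx_onehot_col (inord s : 'I_3)) => [-> | k]; last first.
  by rewrite qembed1E -(inj_eq (@ord_inj _)) !inordK //; apply: ltn_trans s2 _.
case: ifP => r2.
  apply: mulmx_onehot_row => k.
  by rewrite qembed1E -(inj_eq (@ord_inj _)) !inordK // eq_sym.
rewrite mxE big1 // => k _; rewrite qembed1E inordK //.
by case: eqP => [rk | _]; [move: (ltn_ord k); rewrite -rk r2 | rewrite mul0r].
Qed.

End Qutrit.

Theorem mainTheorem3 (C : numClosedFieldType) (U : 'M[C]_2) (U' : 'M[C]_3) :
  unitary U -> unitary U' -> emulates (n := 1) U' U ->
  exists c : seq (gate C),
    all (@gate_wf C) c /\ count (@is_given C) c = 1%N /\
    emulates (n := 3) (circuit_mx U' c) (CCU U).
Proof.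
move=> _ _ emU.
exists [:: GCX C wire0 wire1; GCV C wire1 wire2; GCX C wire0 wire1; GCX C wire0 wire1].
split=> //; split=> //.
apply/matrixP => i j; rewrite /circuit_mx /= mulmx1 -!mulmxA.
rewrite !mulmx_CX01 mulmx_CX01_qembed3 !cx01_cube ctrl2_CX01_entry qembed3_CCU_entry.
by apply: eq_ccu_coef => r s r3 s2; apply: emulates1_entry.
Qed.
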